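(* Assume the orthonormality assumption (A), let $T\ge 2$ and $z_{1:T}\in[V]^T$ with $z_T=q$ and $z_1\neq q$. Let $v_1\neq v_2$ in $[V]$ and suppose the only patterns ''$q\,v$'' occurring in $z_{1:T}$ are $q\,v_1$ and $q\,v_2$, i.e. $f(v)=0$ for all $v\notin\{v_1,v_2\}$, with $f(v_1)+f(v_2)\ge 1$. For fixed $\tau_3>0$ let $\xi^*_v=\lim_{\tau_2\to\infty}\lim_{\tau_1\to\infty}\xi_v(\tau_1,\tau_2,\tau_3)$. Then every maximizer of $v\mapsto\xi^*_v$ over $[V]$ belongs to $\{v_1,v_2\}\cup\operatorname{argmax}_{v\in[V]\setminus\{v_1,v_2\}}\pi_b(v\mid q)$.
   Context: Vocabulary $[V]=\{1,\dots,V\}$, dimension $d$. Given: embedding vectors $w_E(v)\in\mathbb R^d$ and unembedding vectors $w_U(v)\in\mathbb R^d$ for $v\in[V]$; relative positional vectors $r_0,r_{-1},\dots,r_{-(T-1)}\in\mathbb R^d$; matrices $\Phi_1,W_V^2\in\mathbb R^{d\times d}$; a bigram kernel $\pi_b(u\mid v)>0$ with $\sum_u\pi_b(u\mid v)=1$; parameters $\tau_1,\tau_2,\tau_3>0$. $\sigma$ denotes the softmax. The two-layer transformer with relative positional encoding (''stronger associative memory transformer'') acts on $z_{1:T}\in[V]^T$ as follows. Set $W_K^1=\tau_1\sum_{k\in[V]}w_E(k)r_{-1}^\top$, $W_K^2=\tau_2\sum_{k\in[V]}w_E(k)(\Phi_1w_E(k))^\top$, $W_O^2=\tau_3\sum_{v\in[V]}w_U(v)(W_V^2w_E(v))^\top$.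 First layer: for $t\in[T]$ and $s\in[t]$, let $a_{t,s}=(w_E(z_s)+r_{s-t})^\top (W_K^1)^\top w_E(z_t)$ and $x^{(1)}_t=\sum_{s=1}^t\sigma(a_{t,\cdot})_s\,\Phi_1w_E(z_s)+w_E(z_t)$. Second layer: for $s\in[T]$ let $b_s=(x_s^{(1)})^\top (W_K^2)^\top x_T^{(1)}$ and $x_T^{(2)}=\sum_{s=1}^T\sigma(b)_s\,W_O^2W_V^2x_s^{(1)}+x_T^{(1)}$. Feed-forward layer: $W_1\in\mathbb R^{V\times d}$ has $v$-th row $w_E(v)^\top$, $W_2\in\mathbb R^{d\times V}$ has $v$-th column $\sum_{u=1}^V\log\pi_b(u\mid v)\,w_U(u)$, and $x_T=W_2\,\mathrm{ReLU}(W_1x_T^{(2)})+x_T^{(2)}$. The logits are $\xi_v=w_U(v)^\top x_T$ for $v\in[V]$ (written $\xi_v(\tau_1,\tau_2,\tau_3)$ to show dependence on the parameters). Orthonormality assumption (A): the $3V+T$ vectors $w_E(v),\ \Phi_1w_E(v),\ w_U(v)$ ($v\in[V]$) and $r_{-i}$ ($0\le i\le T-1$) form an orthonormal family in $\mathbb R^d$, and the $2V$ vectors $W_V^2w_E(v),\ W_V^2\Phi_1w_E(v)$ ($v\in[V]$) form an orthonormal family in $\mathbb R^d$. For $v\in[V]$, $f(v)=\#\{s\in\{2,\dots,T\}: z_{s-1}=q,\ z_s=v\}$. *)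

From HB Require Import structures.
From mathcomp Require Import all_boot all_order all_algebra.
From mathcomp Require Import all_classical all_reals all_analysis.
Set Implicit Arguments. Unset Strict Implicit. Unset Printing Implicit Defensive.
Import Order.TTheory GRing.Theory Num.Theory.
Local Open Scope ring_scope.

(* Vocabulary [V] is rendered as 'I_V (0-based labels; only labels matter).
   rpos i = r_{-i}  (only 0 <= i <= T-1 is ever used).
   pib u v = pi_b(u | v). *)
Record model (R : realType) (V d : nat) := Model {
  wE : 'I_V -> 'cV[R]_d;
  wU : 'I_V -> 'cV[R]_d;
  rpos : nat -> 'cV[R]_d;
  Phi1 : 'M[R]_d;
  WV2 : 'M[R]_d;
  pib : 'I_V -> 'I_V -> R }.

Section Transformer.
Context {R : realType} {V d : nat}.

Definition dotv (u v : 'cV[R]_d) : R := (u^T *m v) 0 0.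

Definition WK1 (M : model R V d) (tau1 : R) : 'M[R]_d :=
  tau1 *: \sum_(k < V) (wE M k *m (rpos M 1)^T).
Definition WK2 (M : model R V d) (tau2 : R) : 'M[R]_d :=
  tau2 *: \sum_(k < V) (wE M k *m (Phi1 M *m wE M k)^T).
Definition WO2 (M : model R V d) (tau3 : R) : 'M[R]_d :=
  tau3 *: \sum_(v < V) (wU M v *m (WV2 M *m wE M v)^T).

(* positions are 1..T; z : nat -> 'I_V, only z 1, ..., z T matter *)
(* first-layer attention score a_{t,s}, with r_{s-t} = r_{-(t-s)} *)
Definition att1 (M : model R V d) (z : nat -> 'I_V) (tau1 : R) (t s : nat) : R :=
  dotv (wE M (z s) + rpos M (t - s)) ((WK1 M tau1)^T *m wE M (z t)).

Definition x1 (M : model R V d) (z : nat -> 'I_V) (tau1 : R) (t : nat) : 'cV[R]_d :=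
  \sum_(1 <= s < t.+1)
     (expR (att1 M z tau1 t s) / \sum_(1 <= s' < t.+1) expR (att1 M z tau1 t s'))
       *: (Phi1 M *m wE M (z s))
  + wE M (z t).

Definition att2 (M : model R V d) (z : nat -> 'I_V) (T : nat) (tau1 tau2 : R) (s : nat) : R :=
  dotv (x1 M z tau1 s) ((WK2 M tau2)^T *m x1 M z tau1 T).

Definition x2 (M : model R V d) (z : nat -> 'I_V) (T : nat) (tau1 tau2 tau3 : R) : 'cV[R]_d :=
  \sum_(1 <= s < T.+1)
     (expR (att2 M z T tau1 tau2 s) / \sum_(1 <= s' < T.+1) expR (att2 M z T tau1 tau2 s'))
       *: (WO2 M tau3 *m WV2 M *m x1 M z tau1 s)
  + x1 M z tau1 T.

Definition W1 (M : model R V d) : 'M[R]_(V, d) := \matrix_(v < V, j < d) wE M v j 0.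
Definition W2 (M : model R V d) : 'M[R]_(d, V) :=
  \matrix_(j < d, v < V) (\sum_(u < V) ln (pib M u v) *: wU M u) j 0.
Definition relu {n : nat} (x : 'cV[R]_n) : 'cV[R]_n := map_mx (fun a => Num.max a 0) x.

Definition xT (M : model R V d) (z : nat -> 'I_V) (T : nat) (tau1 tau2 tau3 : R) : 'cV[R]_d :=
  W2 M *m relu (W1 M *m x2 M z T tau1 tau2 tau3) + x2 M z T tau1 tau2 tau3.

Definition logit (M : model R V d) (z : nat -> 'I_V) (T : nat) (tau1 tau2 tau3 : R) (v : 'I_V) : R :=
  dotv (wU M v) (xT M z T tau1 tau2 tau3).

Definition family1 (M : model R V d) (T : nat) (i : ('I_V + 'I_V + 'I_V + 'I_T)%type) : 'cV[R]_d :=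
  match i with
  | inl (inl (inl v)) => wE M v
  | inl (inl (inr v)) => Phi1 M *m wE M v
  | inl (inr v) => wU M v
  | inr i => rpos M i
  end.
Arguments family1 M T i : clear implicits.
Definition family2 (M : model R V d) (i : ('I_V + 'I_V)%type) : 'cV[R]_d :=
  match i with
  | inl v => WV2 M *m wE M v
  | inr v => WV2 M *m (Phi1 M *m wE M v)
  end.
Definition orthonormality_A (M : model R V d) (T : nat) : Prop :=
  (forall i j, dotv (family1 M T i) (family1 M T j) = (i == j)%:R) /\
  (forall i j, dotv (family2 M i) (family2 M j) = (i == j)%:R).

Definition fcount (z : nat -> 'I_V) (T : nat) (q v : 'I_V) : nat :=
  count (fun s => (z s.-1 == q) && (z s == v)) (index_iota 2 T.+1).

End Transformer.

From HB Require Import structures.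
From mathcomp Require Import all_boot all_order all_algebra.
From mathcomp Require Import all_classical all_reals all_analysis.
From mathcomp Require Import zify ring lra.
Import Order.TTheory GRing.Theory Num.Theory.
Import numFieldNormedType.Exports.
Local Open Scope classical_set_scope.
Local Open Scope ring_scope.

(* Under (A) every attention score and every read-out collapses to a Kronecker delta. The
   first-layer score is [tau1 * [t - s = 1]], so as [tau1 -> +oo] position [s] attends to its
   predecessor; the second-layer score of position [s] then becomes [tau2 * [z (s-1) = q]], so as
   [tau2 -> +oo] the second layer averages uniformly over the positions following an occurrence of
   [q], and it maps position [s] to [tau3 * wU (z s)]. The feed-forward layer fires only on
   [z T = q] and adds [ln pi_b(. | q)]. Hence [xi*_v = ln pi_b(v | q) + tau3 * f(v) / sum_u f(u)],
   and off [{v1, v2}] only the first term survives. *)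

Section DotProduct.
Context {R : realType} {d : nat}.
Implicit Types (a b c : 'cV[R]_d) (k : R).

Lemma dotvC a b : dotv a b = dotv b a.
Proof. by rewrite /dotv -[a^T *m b]trmxK trmx_mul trmxK mxE. Qed.

Lemma dotvDr a b c : dotv c (a + b) = dotv c a + dotv c b.
Proof. by rewrite /dotv mulmxDr mxE. Qed.

Lemma dotvZr k a c : dotv c (k *: a) = k * dotv c a.
Proof. by rewrite /dotv -scalemxAr mxE. Qed.

Lemma dotvDl a b c : dotv (a + b) c = dotv a c + dotv b c.
Proof. by rewrite dotvC dotvDr !(dotvC c). Qed.

Lemma dotv_sumr (I : Type) (r : seq I) (P : pred I) (F : I -> 'cV[R]_d) c :
  dotv c (\sum_(i <- r | P i) F i) = \sum_(i <- r | P i) dotv c (F i).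
Proof. by rewrite /dotv mulmx_sumr summxE. Qed.

Lemma mul_outer a b c : a *m b^T *m c = dotv b c *: a.
Proof. by rewrite -mulmxA [b^T *m c]mx11_scalar mul_mx_scalar. Qed.

Lemma mul_tr_sum_outer (I : finType) (F G : I -> 'cV[R]_d) c :
  (\sum_i F i *m (G i)^T)^T *m c = \sum_i dotv (F i) c *: G i.
Proof.
rewrite linear_sum /= mulmx_suml; apply: eq_bigr => i _.
by rewrite trmx_mul trmxK mul_outer.
Qed.

End DotProduct.

Lemma sumr_delta {R : nzRingType} {I : eqType} (r : seq I) (F : I -> R) k :
  uniq r -> k \in r -> \sum_(i <- r) (i == k)%:R * F i = F k.
Proof.
move=> r_uniq kr; rewrite (bigD1_seq k) //= eqxx mul1r big1 ?addr0 // => i /negbTE ->.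
by rewrite mul0r.
Qed.

Lemma sum_delta_scale {R : nzRingType} {U : lmodType R} {I : finType} (F : I -> U) k :
  \sum_i (i == k)%:R *: F i = F k.
Proof.
rewrite (bigD1 k) //= eqxx scale1r big1 ?addr0 // => i /negbTE ->.
by rewrite scale0r.
Qed.

Lemma sumr_nat_bool (R : nzSemiRingType) (I : Type) (r : seq I) (b : pred I) :
  \sum_(i <- r) (b i)%:R = (count b r)%:R :> R.
Proof.
elim: r => [|i r IHr]; first by rewrite big_nil.
by rewrite big_cons IHr /= natrD.
Qed.

Lemma sumr_one_size (R : nzSemiRingType) (I : Type) (r : seq I) :
  \sum_(i <- r) 1 = (size r)%:R :> R.
Proof. by rewrite -sum1_size natr_sum. Qed.

Section Softmax.
Context {R : realType} {I : eqType}.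
Implicit Types (r : seq I) (f : I -> R).

Definition softmax r f (i : I) : R := expR (f i) / \sum_(j <- r) expR (f j).

Lemma softmax_seq1 f i : softmax [:: i] f i = 1.
Proof. by rewrite /softmax big_seq1 divff // gt_eqF // expR_gt0. Qed.

Lemma eq_in_softmax r f g : {in r, f =1 g} -> {in r, softmax r f =1 softmax r g}.
Proof.
by move=> fg i ir; rewrite /softmax fg //; congr (_ / _); apply: eq_big_seq => j /fg ->.
Qed.

Lemma sum_expR_gt0 r f i : i \in r -> 0 < \sum_(j <- r) expR (f j).
Proof.
move=> ir; rewrite (perm_big _ (perm_to_rem ir)) big_cons.
by rewrite ltr_pwDl ?expR_gt0 ?sumr_ge0 // => j _; rewrite expR_ge0.
Qed.

Lemma cvg_sum_in {T : Type} (F : set_system T) {FF : Filter F} r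
    (f : I -> T -> R) (a : I -> R) :
  (forall i, i \in r -> f i x @[x --> F] --> a i) ->
  \sum_(i <- r) f i x @[x --> F] --> \sum_(i <- r) a i.
Proof.
move=> fa; rewrite big_seq; under eq_cvg do rewrite big_seq.
by apply: cvg_big => //; exact: add_continuous.
Qed.

Lemma softmax_cvg {T : Type} (F : set_system T) {FF : Filter F} r
    (f : T -> I -> R) (a : I -> R) i :
  i \in r -> (forall j, j \in r -> f x j @[x --> F] --> a j) ->
  softmax r (f x) i @[x --> F] --> softmax r a i.
Proof.
move=> ir fa; have cvg_expR j : j \in r -> expR (f x j) @[x --> F] --> expR (a j).
  by move=> jr; apply: continuous_cvg; [exact: continuous_expR | exact: fa].
apply: cvgM; first exact: cvg_expR.
apply: cvgV; first by rewrite gt_eqF // (sum_expR_gt0 r a i ir).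
exact: cvg_sum_in.
Qed.

Lemma expR_ratio_cvg (a c n m : R) : 0 < n -> n <= m ->
  (a + (expR t - 1) * c) / ((expR t - 1) * n + m) @[t --> +oo] --> c / n.
Proof.
move=> n_gt0 nm; set C := `|n * a - c * m| / (n * n).
have dist_le t : `|(a + (expR t - 1) * c) / ((expR t - 1) * n + m) - c / n|
    <= C * expR (- t).
  have et_gt0 := expR_gt0 t.
  have den_ge : expR t * n <= (expR t - 1) * n + m by nra.
  have den_gt0 : 0 < (expR t - 1) * n + m by nra.
  have -> : (a + (expR t - 1) * c) / ((expR t - 1) * n + m) - c / n =
      (n * a - c * m) / (n * ((expR t - 1) * n + m)).
    by field; apply/andP; split; rewrite gt_eqF.
  rewrite normrM normfV [`|n * _|]ger0_norm; last by rewrite ltW // mulr_gt0.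
  rewrite /C expRN -mulrA -invfM ler_wpM2l // lef_pV2 ?posrE ?mulr_gt0 //; nra.
have Cexp_cvg : C * expR (- t) @[t --> +oo] --> 0.
  by rewrite -(mulr0 C); apply: cvgM; [exact: cvg_cst | exact: cvgr_expR].
apply: (@squeeze_cvgr _ _ _ _ (fun t => c / n - C * expR (- t))
                              (fun t => c / n + C * expR (- t))).
- by apply: nearW => t; rewrite -ler_distl.
- by rewrite -[X in _ --> X]subr0; apply: cvgB => //; exact: cvg_cst.
- by rewrite -[X in _ --> X]addr0; apply: cvgD => //; exact: cvg_cst.
Qed.

Lemma expR_mul_bool (x : R) (b : bool) : expR (x * b%:R) = 1 + (expR x - 1) * b%:R.
Proof. by case: b; rewrite ?mulr1 ?mulr0 ?expR0; ring. Qed.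

Lemma softmax_bool_cvg r (b : pred I) i : has b r ->
  softmax r (fun j => t * (b j)%:R) i @[t --> +oo] --> ((b i)%:R / (count b r)%:R : R).
Proof.
move=> has_b; rewrite has_count in has_b.
have E t : softmax r (fun j => t * (b j)%:R) i =
    (1 + (expR t - 1) * (b i)%:R) / ((expR t - 1) * (count b r)%:R + (size r)%:R).
  rewrite /softmax expR_mul_bool; congr (_ / _).
  under eq_bigr do rewrite expR_mul_bool.
  by rewrite big_split /= -mulr_sumr sumr_nat_bool sumr_one_size addrC.
rewrite (eq_cvg _ _ E); apply: expR_ratio_cvg; first by rewrite ltr0n.
by rewrite ler_nat count_size.
Qed.

Lemma softmax_bool_mean_cvg r (b c : pred I) : has b r ->
  \sum_(i <- r) softmax r (fun j => t * (b j)%:R) i * (c i)%:R @[t --> +oo] -->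
  ((count [pred j | b j && c j] r)%:R / (count b r)%:R : R).
Proof.
move=> has_b; have -> : (count [pred j | b j && c j] r)%:R / (count b r)%:R =
    \sum_(i <- r) (b i)%:R / (count b r)%:R * (c i)%:R :> R.
  rewrite -sumr_nat_bool mulr_suml; apply: eq_bigr => i _.
  by rewrite mulrAC -natrM mulnb.
by apply: cvg_sum_in => i _; apply: cvgM; [exact: softmax_bool_cvg | exact: cvg_cst].
Qed.

End Softmax.

Section Orthonormality.
Context {R : realType} {V d T : nat} {M : model R V d}.
Hypothesis HA : orthonormality_A M T.

Lemma dotv_wE v w : dotv (wE M v) (wE M w) = (v == w)%:R.
Proof. exact: HA.1 (inl (inl (inl v))) (inl (inl (inl w))). Qed.

Lemma dotv_Phi1wE v w : dotv (Phi1 M *m wE M v) (Phi1 M *m wE M w) = (v == w)%:R.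
Proof. exact: HA.1 (inl (inl (inr v))) (inl (inl (inr w))). Qed.

Lemma dotv_wU v w : dotv (wU M v) (wU M w) = (v == w)%:R.
Proof. exact: HA.1 (inl (inr v)) (inl (inr w)). Qed.

Lemma dotv_wE_Phi1wE v w : dotv (wE M v) (Phi1 M *m wE M w) = 0.
Proof. exact: HA.1 (inl (inl (inl v))) (inl (inl (inr w))). Qed.

Lemma dotv_wE_wU v w : dotv (wE M v) (wU M w) = 0.
Proof. exact: HA.1 (inl (inl (inl v))) (inl (inr w)). Qed.

Lemma dotv_Phi1wE_wU v w : dotv (Phi1 M *m wE M v) (wU M w) = 0.
Proof. exact: HA.1 (inl (inl (inr v))) (inl (inr w)). Qed.

Lemma dotv_wE_rpos v i : (i < T)%N -> dotv (wE M v) (rpos M i) = 0.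
Proof. by move=> iT; exact: HA.1 (inl (inl (inl v))) (inr (Ordinal iT)). Qed.

Lemma dotv_rpos i j : (i < T)%N -> (j < T)%N -> dotv (rpos M i) (rpos M j) = (i == j)%:R.
Proof. by move=> iT jT; exact: HA.1 (inr (Ordinal iT)) (inr (Ordinal jT)). Qed.

Lemma dotv_WV2wE v w : dotv (WV2 M *m wE M v) (WV2 M *m wE M w) = (v == w)%:R.
Proof. exact: HA.2 (inl v) (inl w). Qed.

Lemma dotv_WV2wE_WV2Phi1wE v w :
  dotv (WV2 M *m wE M v) (WV2 M *m (Phi1 M *m wE M w)) = 0.
Proof. exact: HA.2 (inl v) (inr w). Qed.

End Orthonormality.

Section Layers.
Context {R : realType} {V d T : nat} (M : model R V d) (z : nat -> 'I_V).
Hypothesis HA : orthonormality_A M T.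

Lemma dotv_x1 (y : 'cV[R]_d) tau1 t :
  dotv y (x1 M z tau1 t) =
  \sum_(1 <= s < t.+1) softmax (index_iota 1 t.+1) (att1 M z tau1 t) s
    * dotv y (Phi1 M *m wE M (z s)) + dotv y (wE M (z t)).
Proof.
by rewrite /x1 dotvDr dotv_sumr; congr (_ + _); apply: eq_bigr => s _; rewrite dotvZr.
Qed.

Lemma dotv_WV2x1 (y : 'cV[R]_d) tau1 t :
  dotv y (WV2 M *m x1 M z tau1 t) =
  \sum_(1 <= s < t.+1) softmax (index_iota 1 t.+1) (att1 M z tau1 t) s
    * dotv y (WV2 M *m (Phi1 M *m wE M (z s))) + dotv y (WV2 M *m wE M (z t)).
Proof.
rewrite /x1 mulmxDr mulmx_sumr dotvDr dotv_sumr; congr (_ + _).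
by apply: eq_bigr => s _; rewrite -scalemxAr dotvZr.
Qed.

Lemma att1E tau1 t s : (1 < T)%N -> (1 <= s)%N -> (s <= t <= T)%N ->
  att1 M z tau1 t s = tau1 * (t - s == 1)%N%:R.
Proof.
move=> T_gt1 s_ge1 /andP[st tT]; rewrite /att1.
have -> : (WK1 M tau1)^T *m wE M (z t) = tau1 *: rpos M 1.
  rewrite /WK1 linearZ /= -scalemxAl mul_tr_sum_outer.
  by under eq_bigr do rewrite (dotv_wE HA); rewrite sum_delta_scale.
by rewrite dotvZr dotvDl (dotv_wE_rpos HA) ?(dotv_rpos HA) ?add0r //; lia.
Qed.

(* Attention that the first layer at position [s] pays to occurrences of the token [q]. *)
Definition x1_mass tau1 (q : 'I_V) s := dotv (Phi1 M *m wE M q) (x1 M z tau1 s).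

Lemma x1_massE tau1 q s : (1 < T)%N -> (s <= T)%N ->
  x1_mass tau1 q s =
  \sum_(1 <= s' < s.+1) softmax (index_iota 1 s.+1) (fun s' => tau1 * (s - s' == 1)%N%:R) s'
    * (q == z s')%:R.
Proof.
move=> T_gt1 sT; rewrite /x1_mass dotv_x1 [dotv _ (wE M _)]dotvC (dotv_wE_Phi1wE HA) addr0.
apply: eq_big_seq => s' s'_range; rewrite (dotv_Phi1wE HA); congr (_ * _).
apply: eq_in_softmax => // i; rewrite mem_index_iota => i_range.
by rewrite att1E //; lia.
Qed.

Lemma att2E tau1 tau2 s : att2 M z T tau1 tau2 s = tau2 * x1_mass tau1 (z T) s.
Proof.
rewrite /att2; have -> : (WK2 M tau2)^T *m x1 M z tau1 T = tau2 *: (Phi1 M *m wE M (z T)).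
  rewrite /WK2 linearZ /= -scalemxAl mul_tr_sum_outer -(sum_delta_scale (fun k => Phi1 M *m wE M k) (z T)).
  congr (_ *: _); apply: eq_bigr => k _.
  rewrite dotv_x1 (dotv_wE HA) big1 ?add0r // => i _.
  by rewrite (dotv_wE_Phi1wE HA) mulr0.
by rewrite dotvZr dotvC.
Qed.

Lemma WO2_WV2_x1 tau1 tau3 s : WO2 M tau3 *m WV2 M *m x1 M z tau1 s = tau3 *: wU M (z s).
Proof.
rewrite -mulmxA /WO2 -scalemxAl mulmx_suml -(sum_delta_scale (wU M) (z s)).
congr (_ *: _); apply: eq_bigr => v _.
rewrite mul_outer dotv_WV2x1 (dotv_WV2wE HA) big1 ?add0r // => i _.
by rewrite (dotv_WV2wE_WV2Phi1wE HA) mulr0.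
Qed.

Lemma x2E tau1 tau2 tau3 :
  x2 M z T tau1 tau2 tau3 =
  \sum_(1 <= s < T.+1)
    (tau3 * softmax (index_iota 1 T.+1) (fun s => tau2 * x1_mass tau1 (z T) s) s) *: wU M (z s)
  + x1 M z tau1 T.
Proof.
rewrite /x2; congr (_ + _); apply: eq_bigr => s _.
by rewrite WO2_WV2_x1 scalerA mulrC (funext (att2E tau1 tau2)).
Qed.

Lemma dotv_wE_x2 tau1 tau2 tau3 w :
  dotv (wE M w) (x2 M z T tau1 tau2 tau3) = (w == z T)%:R.
Proof.
rewrite x2E dotvDr dotv_sumr big1 => [|s _]; last by rewrite dotvZr (dotv_wE_wU HA) mulr0.
rewrite add0r dotv_x1 (dotv_wE HA) big1 ?add0r // => s _.
by rewrite (dotv_wE_Phi1wE HA) mulr0.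
Qed.

Lemma W1_mul (x : 'cV[R]_d) v : (W1 M *m x) v 0 = dotv (wE M v) x.
Proof. by rewrite !mxE /dotv mxE; apply: eq_bigr => j _; rewrite !mxE. Qed.

Lemma feedforward_x2 tau1 tau2 tau3 :
  W2 M *m relu (W1 M *m x2 M z T tau1 tau2 tau3) = \sum_u ln (pib M u (z T)) *: wU M u.
Proof.
apply/matrixP => j k; rewrite (ord1 k) mxE.
rewrite (eq_bigr (fun w => (w == z T)%:R * (\sum_u ln (pib M u w) *: wU M u) j 0)).
  by rewrite (sumr_delta _ _ _ (index_enum_uniq _)) ?mem_index_enum.
move=> w _; rewrite [W2 M _ _]mxE [relu _ _ _]mxE W1_mul dotv_wE_x2 mulrC.
by case: (w == z T); rewrite /= ?max_l ?ler01 ?maxxx.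
Qed.

Lemma logitE tau1 tau2 tau3 v :
  logit M z T tau1 tau2 tau3 v =
  ln (pib M v (z T)) + tau3 * \sum_(1 <= s < T.+1)
    softmax (index_iota 1 T.+1) (fun s => tau2 * x1_mass tau1 (z T) s) s * (v == z s)%:R.
Proof.
rewrite /logit /xT feedforward_x2 x2E dotvDr (dotvDr _ (x1 M z tau1 T)) !dotv_sumr.
rewrite (eq_bigr (fun u => (u == v)%:R * ln (pib M u (z T)))) => [|u _]; last first.
  by rewrite dotvZr (dotv_wU HA) eq_sym mulrC.
rewrite (sumr_delta _ _ _ (index_enum_uniq _)) ?mem_index_enum //; congr (_ + _).
rewrite dotv_x1 [dotv _ (wE M _)]dotvC (dotv_wE_wU HA) addr0 [X in _ + X]big1 => [|s _]; last first.
  by rewrite [dotv (wU M v) _]dotvC (dotv_Phi1wE_wU HA) mulr0.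
rewrite addr0 mulr_sumr; apply: eq_bigr => s _.
by rewrite dotvZr (dotv_wU HA) mulrA.
Qed.

End Layers.

(* The position that the first layer attends to as [tau1 -> +oo]: the previous one, except at
   position 1, which can only attend to itself. *)
Definition prev_pos (s : nat) : nat := maxn 1 s.-1.

Lemma x1_mass_cvg {R : realType} {V d T : nat} (M : model R V d) z q s :
  orthonormality_A M T -> (1 < T)%N -> (1 <= s <= T)%N ->
  x1_mass M z tau1 q s @[tau1 --> +oo] --> ((q == z (prev_pos s))%:R : R).
Proof.
move=> HA T_gt1 /andP[s_ge1 sT].
rewrite (eq_cvg _ _ (fun tau1 => x1_massE M z HA tau1 q s T_gt1 sT)).
have [->|s_ne1] := eqVneq s 1%N.
  under eq_cvg do rewrite big_nat1 softmax_seq1 mul1r.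
  exact: cvg_cst.
set r := index_iota 1 s.+1; set b := fun s' => (s - s' == 1)%N.
have b_prev : {in r, b =1 pred1 s.-1} by move=> s'; rewrite mem_index_iota /b /=; lia.
have prev_r : s.-1 \in r by rewrite mem_index_iota; lia.
have -> : (q == z (prev_pos s))%:R = \sum_(s' <- r) (b s')%:R / (count b r)%:R * (q == z s')%:R :> R.
  rewrite (eq_in_count b_prev) count_uniq_mem ?iota_uniq // prev_r.
  rewrite (eq_big_seq (fun s' => (s' == s.-1)%:R * (q == z s')%:R)) => [|s' s'r]; last first.
    by rewrite b_prev // mulr1n divr1.
  by rewrite sumr_delta ?iota_uniq // /prev_pos (maxn_idPr _) //; lia.
apply: cvg_sum_in => s' _; apply: cvgM; last exact: cvg_cst.
apply: (softmax_bool_cvg r b); apply/hasP; exists s.-1 => //.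
by rewrite b_prev //= ?eqxx.
Qed.

Lemma logit_cvg_tau1 {R : realType} {V d T : nat} (M : model R V d) z q tau2 tau3 v :
  orthonormality_A M T -> (1 < T)%N -> z T = q ->
  logit M z T tau1 tau2 tau3 v @[tau1 --> +oo] -->
  ln (pib M v q) + tau3 * \sum_(s <- index_iota 1 T.+1)
    softmax (index_iota 1 T.+1) (fun s => tau2 * (q == z (prev_pos s))%:R) s * (v == z s)%:R.
Proof.
move=> HA T_gt1 zT; rewrite (eq_cvg _ _ (fun tau1 => logitE M z HA tau1 tau2 tau3 v)) zT.
apply: cvgD; first exact: cvg_cst.
apply: cvgM; first exact: cvg_cst.
apply: cvg_sum_in => s s_range; apply: cvgM; last exact: cvg_cst.
apply: softmax_cvg => // s'; rewrite mem_index_iota => s'_range.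
by apply: cvgM; [exact: cvg_cst | apply: (x1_mass_cvg M z _ _ HA T_gt1); lia].
Qed.

Lemma count_prev_pos {V : nat} (z : nat -> 'I_V) T q v : z 1%N != q ->
  count [pred s | (q == z (prev_pos s)) && (v == z s)] (index_iota 1 T.+1) = fcount z T q v.
Proof.
move=> z1q; case: T => [|T] //; rewrite /fcount /index_iota !subSS !subn0 /=.
rewrite eq_sym (negbTE z1q) /=; apply: eq_in_count => s; rewrite mem_iota => s_range /=.
by rewrite /prev_pos (maxn_idPr _) ?[q == _]eq_sym ?[v == _]eq_sym //; lia.
Qed.

Theorem corollary1 (R : realType) (V d T : nat) (M : model R V d)
  (z : nat -> 'I_V) (q v1 v2 : 'I_V) (tau3 : R) :
  orthonormality_A M T ->
  (forall u v, 0 < pib M u v) ->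
  (forall v, \sum_(u < V) pib M u v = 1) ->
  0 < tau3 ->
  (2 <= T)%N ->
  z T = q -> z 1%N != q ->
  v1 != v2 ->
  (forall v, v != v1 -> v != v2 -> fcount z T q v = 0%N) ->
  (1 <= fcount z T q v1 + fcount z T q v2)%N ->
  exists (L1 : R -> 'I_V -> R) (xistar : 'I_V -> R),
    (forall tau2, 0 < tau2 -> forall v,
       logit M z T tau1 tau2 tau3 v @[tau1 --> +oo] --> L1 tau2 v) /\
    (forall v, L1 tau2 v @[tau2 --> +oo] --> xistar v) /\
    (forall w, (forall v, xistar v <= xistar w) ->
       w = v1 \/ w = v2 \/
       [/\ w != v1, w != v2 &
           forall u, u != v1 -> u != v2 -> pib M u q <= pib M w q]).
Proof.
move=> HA pib_gt0 _ _ T_ge2 zT z1q _ f0 f_pos.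
set r := index_iota 1 T.+1; set G := fun s => q == z (prev_pos s).
have has_G : has G r.
  have [v fv] : exists v, (0 < fcount z T q v)%N.
    by case: (posnP (fcount z T q v1)) => [f1|]; [exists v2; lia | exists v1].
  rewrite -(count_prev_pos _ _ _ _ z1q) -has_count in fv.
  by apply: sub_has fv => s /andP[].
exists (fun tau2 v => ln (pib M v q) +
  tau3 * \sum_(s <- r) softmax r (fun s => tau2 * (G s)%:R) s * (v == z s)%:R).
exists (fun v => ln (pib M v q) + tau3 * ((fcount z T q v)%:R / (count G r)%:R)).
split; [|split].
- by move=> tau2 _ v; apply: logit_cvg_tau1 => //; lia.
- move=> v; apply: cvgD; first exact: cvg_cst.
  apply: cvgM; first exact: cvg_cst.
  by rewrite -(count_prev_pos _ _ _ _ z1q); exact: softmax_bool_mean_cvg.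
move=> w w_max; have [->|wv1] := eqVneq w v1; first by left.
have [->|wv2] := eqVneq w v2; first by right; left.
right; right; split => // u uv1 uv2.
have := w_max u; rewrite !f0 // !mul0r !mulr0 !addr0.
by rewrite ler_ln ?posrE.
Qed.
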